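(* Let $A,\Delta A\in\mathbb{R}^{n\times m}$, $\widetilde A=A+\Delta A$, $1\le r<\min\{n,m\}$, and assume $\widetilde\sigma_r>0$ so that $\widetilde\Sigma_1$ is invertible. Let $U_1^T\widetilde U_1=Q_1SQ_2^T$ be an SVD ($Q_1,Q_2\in\mathbb{O}_r$, $S$ diagonal nonnegative) and $Q=Q_1Q_2^T$. Then \[\widetilde U_1-U_1Q=U_2U_2^T(\Delta A)V_1V_1^T\widetilde V_1\widetilde\Sigma_1^{-1}+U_2U_2^T(\Delta A)V_2V_2^T\widetilde V_1\widetilde\Sigma_1^{-1}+U_2\Sigma_2V_2^T\widetilde V_1\widetilde\Sigma_1^{-1}+U_1Q_1(S-I)Q_2^T,\] and $\|S-I\|\le\|\sin\Theta(U_1,\widetilde U_1)\|^2$.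
   Context: $A=U\Sigma V^T$, $\widetilde A=\widetilde U\widetilde\Sigma\widetilde V^T$ are full SVDs ($U,\widetilde U\in\mathbb{R}^{n\times n}$, $V,\widetilde V\in\mathbb{R}^{m\times m}$ orthogonal, singular values $\sigma_1\ge\dots$ and $\widetilde\sigma_1\ge\dots$ nonincreasing). $U=(U_1\ U_2)$, $U_1\in\mathbb{R}^{n\times r}$; $V=(V_1\ V_2)$, $V_1\in\mathbb{R}^{m\times r}$; $\widetilde U_1,\widetilde V_1$ analogously for $\widetilde A$; $\widetilde\Sigma_1=\mathrm{diag}(\widetilde\sigma_1,\dots,\widetilde\sigma_r)$; $\Sigma_2\in\mathbb{R}^{(n-r)\times(m-r)}$ is rectangular diagonal with diagonal $\sigma_{r+1},\sigma_{r+2},\dots$. $\mathbb{O}_r$ is the set of $r\times r$ orthogonal matrices. $\|\cdot\|$ is the spectral norm. For $X,\widetilde X\in\mathbb{R}^{d\times r}$ with orthonormal columns, if $\zeta_1\ge\dots\ge\zeta_r$ are the singular values of $X^T\widetilde X$, then $\sin\Theta(X,\widetilde X)=\mathrm{diag}(\sqrt{1-\zeta_1^2},\dots,\sqrt{1-\zeta_r^2})$. *)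

From HB Require Import structures.
From mathcomp Require Import all_boot all_order all_algebra.
From mathcomp Require Import classical_sets reals.
Set Implicit Arguments. Unset Strict Implicit. Unset Printing Implicit Defensive.
Import Order.TTheory GRing.Theory Num.Theory.
Local Open Scope ring_scope.
Local Open Scope classical_set_scope.

Section Defs.
Variable R : realType.

Definition orthogonal_mx (k : nat) (Q : 'M[R]_k) : Prop := Q^T *m Q = 1%:M.

Definition rdiag (a b : nat) (D : 'M[R]_(a, b)) : Prop :=
  forall (i : 'I_a) (j : 'I_b), (i : nat) <> j -> D i j = 0.

Definition diag_nonneg_noninc (a b : nat) (D : 'M[R]_(a, b)) : Prop :=
  forall (i1 i2 : 'I_a) (j1 j2 : 'I_b),
    (i1 : nat) = j1 -> (i2 : nat) = j2 -> (i1 <= i2)%N ->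
    0 <= D i2 j2 /\ D i2 j2 <= D i1 j1.

Definition svd_of (a b : nat) (M : 'M[R]_(a, b)) (P : 'M[R]_a) (D : 'M[R]_(a, b))
    (W : 'M[R]_b) : Prop :=
  [/\ orthogonal_mx P, orthogonal_mx W, rdiag D, diag_nonneg_noninc D
    & M = P *m D *m W^T].

Definition singvals_of (k : nat) (M : 'M[R]_k) (z : 'rV[R]_k) : Prop :=
  exists P W, svd_of M P (diag_mx z) W.

(* the singular values, zeta_1 >= ... >= zeta_k (chosen; they are unique) *)
Definition singvals (k : nat) (M : 'M[R]_k) : 'rV[R]_k :=
  xget 0 (fun z => singvals_of M z).

Definition sinTheta (d k : nat) (X Xt : 'M[R]_(d, k)) : 'M[R]_k :=
  let z := singvals (X^T *m Xt) in diag_mx (\row_i Num.sqrt (1 - z 0 i ^+ 2)).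

Definition vnorm (b : nat) (x : 'cV[R]_b) : R := Num.sqrt (\sum_j x j 0 ^+ 2).

Definition spnorm (a b : nat) (M : 'M[R]_(a, b)) : R :=
  sup [set y | exists x : 'cV[R]_b, vnorm x = 1 /\ y = vnorm (M *m x)].

End Defs.

From HB Require Import structures.
From mathcomp Require Import all_boot all_order all_algebra.
From mathcomp Require Import classical_sets reals.
From mathcomp Require Import boolp lra.
Import Order.TTheory GRing.Theory Num.Theory.
Local Open Scope ring_scope.
Set Implicit Arguments. Unset Strict Implicit. Unset Printing Implicit Defensive.

(* Multiplying the SVD of A + dA by Vt1 gives Ut1 = (A + dA) Vt1 Sgt1^-1.  The
   identity follows by splitting Ut1 = U1 U1^T Ut1 + U2 U2^T Ut1 and dA = dA (V1 V1^T
   + V2 V2^T), and substituting U1^T Ut1 = Q1 S Q2^T and U2^T A = Sg2 V2^T.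
   For the bound, the diagonal entry s_i of S is the length of the image of the unit
   vector Q2 e_i under the contraction U1^T Ut1, so 0 <= s_i <= 1 and s_i is at least
   the smallest singular value zeta_r of U1^T Ut1.  Hence
   1 - s_i <= 1 - s_i^2 <= 1 - zeta_r^2 <= |sin Theta(U1, Ut1)|^2. *)

Section SpectralNorm.
Variable R : realType.

Definition sqnorm (b : nat) (x : 'cV[R]_b) : R := (x^T *m x) 0 0.

Lemma sqnormE b (x : 'cV[R]_b) : sqnorm x = \sum_j x j 0 ^+ 2.
Proof. by rewrite /sqnorm mxE; apply: eq_bigr => j _; rewrite !mxE expr2. Qed.

Lemma sqnorm_ge0 b (x : 'cV[R]_b) : 0 <= sqnorm x.
Proof. by rewrite sqnormE; apply: sumr_ge0 => j _; apply: sqr_ge0. Qed.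

Lemma vnormE b (x : 'cV[R]_b) : vnorm x = Num.sqrt (sqnorm x).
Proof. by rewrite sqnormE. Qed.

Lemma sqnorm_unit b (x : 'cV[R]_b) : vnorm x = 1 -> sqnorm x = 1.
Proof. by rewrite vnormE => h; rewrite -(sqr_sqrtr (sqnorm_ge0 x)) h expr1n. Qed.

Lemma sqnormZ b s (x : 'cV[R]_b) : sqnorm (s *: x) = s ^+ 2 * sqnorm x.
Proof. by rewrite !sqnormE mulr_sumr; apply: eq_bigr => j _; rewrite mxE exprMn. Qed.

Lemma sqnorm_delta b (i : 'I_b) : sqnorm (delta_mx i 0 : 'cV[R]_b) = 1.
Proof. by rewrite /sqnorm trmx_delta mul_delta_mx mxE !eqxx. Qed.

Lemma vnorm_delta b (i : 'I_b) : vnorm (delta_mx i 0 : 'cV[R]_b) = 1.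
Proof. by rewrite vnormE sqnorm_delta sqrtr1. Qed.

Lemma sqnorm_isometry a b (X : 'M[R]_(a, b)) x :
  X^T *m X = 1%:M -> sqnorm (X *m x) = sqnorm x.
Proof. by move=> h; rewrite /sqnorm trmx_mul mulmxA -(mulmxA x^T) h mulmx1. Qed.

Lemma sqnorm_split a b c (X : 'M[R]_(a, b)) (Y : 'M[R]_(a, c)) y :
  X *m X^T + Y *m Y^T = 1%:M -> sqnorm y = sqnorm (X^T *m y) + sqnorm (Y^T *m y).
Proof.
move=> h; rewrite /sqnorm !trmx_mul !trmxK.
have -> : y^T *m y = y^T *m (1%:M *m y) by rewrite mul1mx.
by rewrite -h mulmxDl mulmxDr !mulmxA mxE.
Qed.

Lemma sqnorm_trmx_mul_le a b c (X : 'M[R]_(a, b)) (Y : 'M[R]_(a, c)) y :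
  X *m X^T + Y *m Y^T = 1%:M -> sqnorm (X^T *m y) <= sqnorm y.
Proof. by move=> hXY; rewrite [leRHS](sqnorm_split _ hXY) lerDl sqnorm_ge0. Qed.

Lemma spnorm_le a b (M : 'M[R]_(a, b)) c : (0 < b)%N ->
  (forall x, vnorm x = 1 -> vnorm (M *m x) <= c) -> spnorm M <= c.
Proof.
move=> b_gt0 hc; apply: ge_sup => [|y [x [x1 ->]]]; last exact: hc.
by exists (vnorm (M *m delta_mx (Ordinal b_gt0) 0)), (delta_mx (Ordinal b_gt0) 0);
  rewrite vnorm_delta.
Qed.

Lemma vnorm_mul_le_spnorm a b (M : 'M[R]_(a, b)) c x :
  (forall x, vnorm x = 1 -> vnorm (M *m x) <= c) ->
  vnorm x = 1 -> vnorm (M *m x) <= spnorm M.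
Proof.
move=> hc x1; apply: sup_upper_bound; last by exists x.
split; first by exists (vnorm (M *m x)), x.
by exists c => y [x' [x'1 ->]]; apply: hc.
Qed.

Lemma mul_diag_mx_delta k (d : 'rV[R]_k) i :
  diag_mx d *m delta_mx i 0 = d 0 i *: (delta_mx i 0 : 'cV_k).
Proof.
apply/matrixP => a b; rewrite mul_diag_mx !mxE.
by case: eqVneq => [->|]; rewrite ?mulr1 ?mulr0.
Qed.

Lemma sqnorm_diag_mx_le k (d : 'rV[R]_k) c x : (forall i, d 0 i ^+ 2 <= c) ->
  sqnorm (diag_mx d *m x) <= c * sqnorm x.
Proof.
move=> hc; rewrite !sqnormE mulr_sumr; apply: ler_sum => i _.
by rewrite mul_diag_mx mxE exprMn ler_wpM2r ?sqr_ge0.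
Qed.

Lemma sqnorm_diag_mx_ge k (d : 'rV[R]_k) c x : (forall i, c <= d 0 i ^+ 2) ->
  c * sqnorm x <= sqnorm (diag_mx d *m x).
Proof.
move=> hc; rewrite !sqnormE mulr_sumr; apply: ler_sum => i _.
by rewrite mul_diag_mx mxE exprMn ler_wpM2r ?sqr_ge0.
Qed.

Lemma vnorm_diag_mx_le k (d : 'rV[R]_k) c x : 0 <= c ->
  (forall i, `|d 0 i| <= c) -> vnorm x = 1 -> vnorm (diag_mx d *m x) <= c.
Proof.
move=> c_ge0 hc x1; rewrite vnormE -(ger0_norm c_ge0) -sqrtr_sqr ler_wsqrtr //.
rewrite -[leRHS]mulr1 -(sqnorm_unit x1); apply: sqnorm_diag_mx_le => i.
by rewrite -real_normK ?num_real // lerXn2r ?nnegrE.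
Qed.

Lemma spnorm_diag_mx_le k (d : 'rV[R]_k) c : (0 < k)%N -> 0 <= c ->
  (forall i, `|d 0 i| <= c) -> spnorm (diag_mx d) <= c.
Proof. by move=> k_gt0 c_ge0 hc; apply: spnorm_le => // x; apply: vnorm_diag_mx_le. Qed.

Lemma norm_le_spnorm_diag_mx k (d : 'rV[R]_k) i : `|d 0 i| <= spnorm (diag_mx d).
Proof.
have hd : forall x, vnorm x = 1 -> vnorm (diag_mx d *m x) <= \sum_j `|d 0 j|.
  move=> x x1; apply: vnorm_diag_mx_le x1 => [|j]; first exact: sumr_ge0.
  by rewrite (bigD1 j) //= lerDl sumr_ge0.
have := vnorm_mul_le_spnorm hd (vnorm_delta i).
by rewrite mul_diag_mx_delta vnormE sqnormZ sqnorm_delta mulr1 sqrtr_sqr.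
Qed.

End SpectralNorm.

Section SvdBlocks.
Variable R : realType.

Lemma orthogonal_mx_tr k (W : 'M[R]_k) : orthogonal_mx W -> orthogonal_mx W^T.
Proof. by rewrite /orthogonal_mx trmxK => /mulmx1C. Qed.

Lemma orthogonal_mx_hsubmx a b (U : 'M[R]_(a + b)) : orthogonal_mx U ->
  [/\ (lsubmx U)^T *m lsubmx U = 1%:M, (rsubmx U)^T *m lsubmx U = 0,
      (rsubmx U)^T *m rsubmx U = 1%:M
    & lsubmx U *m (lsubmx U)^T + rsubmx U *m (rsubmx U)^T = 1%:M].
Proof.
rewrite /orthogonal_mx => hU; have hU' := mulmx1C hU.
rewrite -[U]hsubmxK tr_row_mx mul_col_row (scalar_mx_block a b) in hU.
rewrite -[U]hsubmxK tr_row_mx mul_row_col in hU'.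
by case: (eq_block_mx hU) => -> _ -> ->.
Qed.

Lemma rdiag_diag_mx k (S : 'M[R]_k) : rdiag S -> S = diag_mx (\row_i S i i).
Proof.
move=> hS; apply/matrixP => i j; rewrite !mxE.
case: eqVneq => [-> | /eqP ij]; first by rewrite mulr1n.
by rewrite mulr0n hS // => /val_inj.
Qed.

Lemma mulmx_svd_delta k (Q1 S Q2 : 'M[R]_k) i : orthogonal_mx Q2 -> rdiag S ->
  Q1 *m S *m Q2^T *m (Q2 *m delta_mx i 0) = S i i *: (Q1 *m (delta_mx i 0 : 'cV_k)).
Proof.
move=> hQ2 hS; rewrite -!mulmxA (mulmxA Q2^T) hQ2 mul1mx {1}(rdiag_diag_mx hS).
by rewrite mul_diag_mx_delta mxE scalemxAr.
Qed.

Lemma rdiag_ulsubmx r p q (D : 'M[R]_(r + p, r + q)) : rdiag D -> rdiag (ulsubmx D).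
Proof. by move=> hD i j ij; rewrite !mxE; apply: hD. Qed.

Lemma rdiag_dlsubmx r p q (D : 'M[R]_(r + p, r + q)) : rdiag D -> dlsubmx D = 0.
Proof.
move=> hD; apply/matrixP => i j; rewrite !mxE; apply: hD => /= e.
by have := ltn_ord j; rewrite -e ltnNge leq_addr.
Qed.

Variables (r p q : nat) (M : 'M[R]_(r + p, r + q)).
Variables (P : 'M[R]_(r + p)) (D : 'M[R]_(r + p, r + q)) (W : 'M[R]_(r + q)).
Hypothesis svdM : svd_of M P D W.

Lemma svd_mul_lsubmx : M *m lsubmx W = lsubmx P *m ulsubmx D.
Proof.
case: svdM => _ hW hD _ ->; have [hW1 hW21 _ _] := orthogonal_mx_hsubmx hW.
have -> : P *m D *m W^T *m lsubmx W = P *m D *m col_mx 1%:M 0.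
  by rewrite -mulmxA -{1}[W]hsubmxK tr_row_mx mul_col_mx hW1 hW21.
rewrite -[D]submxK (rdiag_dlsubmx hD) -mulmxA mul_block_col !mulmx1 !mulmx0 !addr0.
by rewrite block_mxKul -{1}[P]hsubmxK mul_row_col mulmx0 addr0.
Qed.

Lemma svd_trmx_rsubmx_mul : (rsubmx P)^T *m M = drsubmx D *m (rsubmx W)^T.
Proof.
case: svdM => hP _ hD _ ->; have [_ hP21 hP2 _] := orthogonal_mx_hsubmx hP.
have -> : (rsubmx P)^T *m (P *m D *m W^T) = row_mx 0 1%:M *m D *m W^T.
  by rewrite !mulmxA -{2}[P]hsubmxK mul_mx_row hP21 hP2.
rewrite -{1}[D]submxK (rdiag_dlsubmx hD) mul_row_block !mul0mx !mul1mx !add0r.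
by rewrite -[W in W^T]hsubmxK tr_row_mx mul_row_col mul0mx add0r.
Qed.

Lemma svd_ulsubmx_unitmx :
  (forall i : 'I_r, (i : nat) = r.-1 -> 0 < ulsubmx D i i) -> ulsubmx D \in unitmx.
Proof.
case: svdM => _ _ hD hnn _ hlast.
rewrite (rdiag_diag_mx (rdiag_ulsubmx hD)) unitmxE det_diag unitfE.
apply/lt0r_neq0/prodr_gt0 => i _; rewrite mxE.
have r_gt0 : (0 < r)%N := leq_ltn_trans (leq0n i) (ltn_ord i).
have r_last : (r.-1 < r)%N by rewrite ltn_predL.
have := hlast (Ordinal r_last) erefl; rewrite !mxE => /lt_le_trans; apply.
have i_le : (i <= r.-1)%N by rewrite -ltnS prednK.
by have [] := hnn (lshift p i) (lshift p (Ordinal r_last)) (lshift q i)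
  (lshift q (Ordinal r_last)) erefl erefl i_le.
Qed.

End SvdBlocks.

Section SinTheta.
Variable R : realType.

(* Also covers the junk value [singvals M = 0], taken when [M] has no SVD. *)
Lemma singvals_last_sqnorm_le k (M : 'M[R]_k) (i : 'I_k) x : (i : nat) = k.-1 ->
  0 <= singvals M 0 i /\ singvals M 0 i ^+ 2 * sqnorm x <= sqnorm (M *m x).
Proof.
move=> i_last; rewrite /singvals.
case: (pselect (exists z, singvals_of M z)) => [ex | nex]; last first.
  rewrite xgetPN => [|z hz]; last by apply: nex; exists z.
  by rewrite mxE expr0n /= mul0r sqnorm_ge0.
have [P [W [hP hW _ hnn hM]]] := xgetPex 0 ex.
set z := xget 0 _ in hnn hM *; rewrite [in sqnorm (M *m x)]hM.
have z_le j : 0 <= z 0 i /\ z 0 i <= z 0 j.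
  have j_le : (j <= i)%N by rewrite i_last -ltnS prednK // (leq_ltn_trans _ (ltn_ord j)).
  by have := hnn j i j i erefl erefl j_le; rewrite !mxE !eqxx !mulr1n.
split; first by case: (z_le i).
rewrite -!mulmxA sqnorm_isometry // -[in leLHS](sqnorm_isometry x (orthogonal_mx_tr hW)).
apply: sqnorm_diag_mx_ge => j; have [z0 zj] := z_le j.
by rewrite lerXn2r ?nnegrE // (le_trans z0).
Qed.

Lemma singvals_sq_defect_le_spnorm_sinTheta d k (X Xt : 'M[R]_(d, k)) i :
  1 - singvals (X^T *m Xt) 0 i ^+ 2 <= spnorm (sinTheta X Xt) ^+ 2.
Proof.
set c := 1 - _; rewrite /sinTheta.
have := norm_le_spnorm_diag_mx (\row_j Num.sqrt (1 - singvals (X^T *m Xt) 0 j ^+ 2)) i.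
rewrite mxE ger0_norm ?sqrtr_ge0 // -/c => sqrt_le.
have [c_le0 | c_gt0] := lerP c 0; first exact: le_trans c_le0 (sqr_ge0 _).
rewrite -(sqr_sqrtr (ltW c_gt0)) lerXn2r ?nnegrE ?sqrtr_ge0 //.
exact: le_trans (sqrtr_ge0 _) sqrt_le.
Qed.

End SinTheta.

Section CosineDefect.
Variable R : realType.
Variables (a r p : nat) (U1 Ut1 : 'M[R]_(a, r)) (U2 : 'M[R]_(a, p)).
Variables (Q1 S Q2 : 'M[R]_r).
Hypotheses (hU : U1 *m U1^T + U2 *m U2^T = 1%:M) (hUt1 : Ut1^T *m Ut1 = 1%:M).
Hypotheses (hQ1 : orthogonal_mx Q1) (hQ2 : orthogonal_mx Q2).
Hypotheses (hS : rdiag S) (hS0 : forall i, 0 <= S i i).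
Hypothesis hM : U1^T *m Ut1 = Q1 *m S *m Q2^T.

Lemma sqnorm_cross_mul_delta i :
  sqnorm (U1^T *m Ut1 *m (Q2 *m delta_mx i 0)) = S i i ^+ 2.
Proof.
by rewrite hM mulmx_svd_delta // sqnormZ sqnorm_isometry // sqnorm_delta mulr1.
Qed.

Lemma cross_diag_le1 i : S i i <= 1.
Proof.
have := sqnorm_trmx_mul_le (Ut1 *m (Q2 *m delta_mx i 0)) hU.
rewrite mulmxA sqnorm_cross_mul_delta !sqnorm_isometry // sqnorm_delta.
by have := hS0 i; nra.
Qed.

Lemma singvals_last_le_cross_diag (k : 'I_r) i : (k : nat) = r.-1 ->
  0 <= singvals (U1^T *m Ut1) 0 k <= S i i.
Proof.
move=> k_last.
have [z_ge0] := singvals_last_sqnorm_le (U1^T *m Ut1) (Q2 *m delta_mx i 0) k_last.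
rewrite sqnorm_cross_mul_delta sqnorm_isometry // sqnorm_delta mulr1 => z_le.
by rewrite z_ge0 -(ler_pXn2r (n := 2)) ?nnegrE.
Qed.

Lemma spnorm_cross_defect_le_sinTheta : (0 < r)%N ->
  spnorm (S - 1%:M) <= spnorm (sinTheta U1 Ut1) ^+ 2.
Proof.
move=> r_gt0; have r_last : (r.-1 < r)%N by rewrite ltn_predL.
set k := Ordinal r_last; set z := singvals (U1^T *m Ut1) 0 k.
have -> : S - 1%:M = diag_mx (\row_i (S i i - 1)).
  rewrite {1}(rdiag_diag_mx hS) -diag_const_mx -linearB /=.
  by congr diag_mx; apply/rowP => i; rewrite !mxE.
apply: spnorm_diag_mx_le => // [|i]; first exact: sqr_ge0.
have /andP[z_ge0 z_le] := singvals_last_le_cross_diag i (erefl : (k : nat) = r.-1).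
have s_ge0 := hS0 i; have s_le1 := cross_diag_le1 i.
have z2_le : z ^+ 2 <= S i i ^+ 2 by rewrite lerXn2r ?nnegrE.
have s2_le : S i i ^+ 2 <= S i i by rewrite expr2 ler_piMr.
have := singvals_sq_defect_le_spnorm_sinTheta U1 Ut1 k; rewrite -/z.
rewrite mxE ler0_norm ?subr_le0 //; lra.
Qed.

End CosineDefect.

Section PerturbationExpansion.
Variable R : realType.
Variables (r p q : nat) (A dA : 'M[R]_(r + p, r + q)).
Variables (U Ut : 'M[R]_(r + p)) (V Vt : 'M[R]_(r + q)) (Sg Sgt : 'M[R]_(r + p, r + q)).
Variables (Q1 S Q2 : 'M[R]_r).
Hypotheses (svdA : svd_of A U Sg V) (svdAt : svd_of (A + dA) Ut Sgt Vt).
Hypothesis hlast : forall i : 'I_r, (i : nat) = r.-1 -> 0 < ulsubmx Sgt i i.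
Local Notation U1 := (lsubmx U).
Local Notation U2 := (rsubmx U).
Local Notation V1 := (lsubmx V).
Local Notation V2 := (rsubmx V).
Local Notation Ut1 := (lsubmx Ut).
Local Notation Vt1 := (lsubmx Vt).
Local Notation Sinv := (invmx (ulsubmx Sgt)).
Hypothesis hM : U1^T *m Ut1 = Q1 *m S *m Q2^T.

Lemma lsubmx_perturbed_svd : Ut1 = (A + dA) *m Vt1 *m Sinv.
Proof. by rewrite (svd_mul_lsubmx svdAt) mulmxK // (svd_ulsubmx_unitmx svdAt hlast). Qed.

Lemma perturbed_lsubmx_expansion :
  Ut1 - U1 *m (Q1 *m Q2^T) =
    U2 *m U2^T *m dA *m V1 *m V1^T *m Vt1 *m Sinv
  + U2 *m U2^T *m dA *m V2 *m V2^T *m Vt1 *m Sinv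
  + U2 *m drsubmx Sg *m V2^T *m Vt1 *m Sinv
  + U1 *m Q1 *m (S - 1%:M) *m Q2^T.
Proof.
case: (svdA) => hU hV _ _ _.
have [_ _ _ hUU] := orthogonal_mx_hsubmx hU; have [_ _ _ hVV] := orthogonal_mx_hsubmx hV.
have splitUt1 : Ut1 = U1 *m Q1 *m S *m Q2^T + U2 *m U2^T *m (A + dA) *m Vt1 *m Sinv.
  rewrite -{1}[Ut1]mul1mx -hUU mulmxDl -!mulmxA hM {1}lsubmx_perturbed_svd.
  by rewrite !mulmxA.
have splitA : U2 *m U2^T *m A *m Vt1 *m Sinv = U2 *m drsubmx Sg *m V2^T *m Vt1 *m Sinv.
  by rewrite -(mulmxA U2) (svd_trmx_rsubmx_mul svdA) !mulmxA.
have splitdA : U2 *m U2^T *m dA *m Vt1 *m Sinv =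
    U2 *m U2^T *m dA *m V1 *m V1^T *m Vt1 *m Sinv
  + U2 *m U2^T *m dA *m V2 *m V2^T *m Vt1 *m Sinv.
  by rewrite -{1}(mulmx1 dA) -hVV !mulmxDr !mulmxDl !mulmxA.
have splitS : U1 *m Q1 *m S *m Q2^T = U1 *m (Q1 *m Q2^T) + U1 *m Q1 *m (S - 1%:M) *m Q2^T.
  by rewrite mulmxBr mulmx1 mulmxBl !mulmxA addrC subrK.
rewrite splitUt1 (mulmxDr (U2 *m U2^T)) !mulmxDl splitA splitdA splitS.
by rewrite addrAC [_ + _ - _]addrAC subrr add0r addrC [_ + (_ + _)]addrC.
Qed.

End PerturbationExpansion.

(* n = r + p, m = r + q with p, q >= 1 encodes 1 <= r < min(n, m). *)
Theorem proposition3p11 (R : realType) (r p q : nat)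
  (A dA : 'M[R]_(r + p, r + q))
  (U Ut : 'M[R]_(r + p)) (V Vt : 'M[R]_(r + q))
  (Sg Sgt : 'M[R]_(r + p, r + q))
  (Q1 Q2 S : 'M[R]_r) :
  (1 <= r)%N -> (1 <= p)%N -> (1 <= q)%N ->
  svd_of A U Sg V ->
  svd_of (A + dA) Ut Sgt Vt ->
  (forall i : 'I_r, (i : nat) = r.-1 -> 0 < ulsubmx Sgt i i) ->
  orthogonal_mx Q1 -> orthogonal_mx Q2 ->
  rdiag S -> (forall i : 'I_r, 0 <= S i i) ->
  (lsubmx U)^T *m lsubmx Ut = Q1 *m S *m Q2^T ->
  let U1 := lsubmx U in let U2 := rsubmx U in
  let V1 := lsubmx V in let V2 := rsubmx V in
  let Ut1 := lsubmx Ut in let Vt1 := lsubmx Vt in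
  let Sgt1inv := invmx (ulsubmx Sgt) in
  let Sg2 := drsubmx Sg in
  let Q := Q1 *m Q2^T in
  Ut1 - U1 *m Q =
    U2 *m U2^T *m dA *m V1 *m V1^T *m Vt1 *m Sgt1inv
  + U2 *m U2^T *m dA *m V2 *m V2^T *m Vt1 *m Sgt1inv
  + U2 *m Sg2 *m V2^T *m Vt1 *m Sgt1inv
  + U1 *m Q1 *m (S - 1%:M) *m Q2^T
  /\ spnorm (S - 1%:M) <= spnorm (sinTheta U1 Ut1) ^+ 2.
Proof.
move=> r_gt0 _ _ svdA svdAt hlast hQ1 hQ2 hS hS0 hM /=.
split; first exact: perturbed_lsubmx_expansion svdA svdAt hlast hM.
have [[hU _ _ _ _] [hUt _ _ _ _]] := (svdA, svdAt).
have [_ _ _ hUU] := orthogonal_mx_hsubmx hU.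
have [hUt1 _ _ _] := orthogonal_mx_hsubmx hUt.
exact: spnorm_cross_defect_le_sinTheta hUU hUt1 hQ1 hQ2 hS hS0 hM r_gt0.
Qed.
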